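(* Let $\rho:VB_n\to \mathrm{GL}_n(\mathbb{Z}[s]/(s^2))$ be the homomorphism defined on generators by $\rho(\sigma_i)=I_{i-1}\oplus\begin{pmatrix}0&1\\1&0\end{pmatrix}\oplus I_{n-i-1}$ and $\rho(\tau_i)=I_{i-1}\oplus\begin{pmatrix}s&1+s\\1-s&-s\end{pmatrix}\oplus I_{n-i-1}$. Then for every virtual braid $\beta\in VB_n$, $M(\beta)^T=\rho(\beta)$, where $M(\beta)$ is the bowling ball matrix of $\beta$ regarded as a virtual $n$-string link.
   Context: $VB_n$ is the virtual braid group on $n$ strands, generated by $\sigma_1,\dots,\sigma_{n-1}$ ($\sigma_i$ a positive real crossing between the strands in positions $i$ and $i+1$) and $\tau_1,\dots,\tau_{n-1}$ ($\tau_i$ a virtual crossing between positions $i$ and $i+1$), with strands oriented from top ($\mathbb{R}\times\{1\}$) to bottom ($\mathbb{R}\times\{0\}$). A word $g_1g_2\cdots g_k$ in the generators is represented by stacking the generator diagrams with $g_1$ at the bottom and $g_k$ at the top, so that $\rho(g_1\cdots g_k)=\rho(g_1)\cdots\rho(g_k)$; $s$ is a formal variable with $s^2=0$. Bowling ball matrix $M(L)$ of a virtual $n$-string link diagram $L$ (strings from $(i,1)$ to $(\pi(i),0)$, crossings real or virtual): a ball travels from a top endpoint along the orientation. At a real crossing it always continues along its strand (weight $1$). At a virtual crossing, rotated so both strands point downward, a ball arriving along the strand entering from the upper left jumps to the other strand with weight $s$ and continues with weight $1-s$; a ball arriving along the strand from the upper right jumps with weight $-s$ and continues with weight $1+s$.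 A path's weight is the product of these weights over the virtual crossings it passes, and $M(L)_{ij}$ is the sum in $\mathbb{Z}[s]/(s^2)$ of the weights of all paths from $(i,1)$ to $(j,0)$. *)

From HB Require Import structures.
From mathcomp Require Import all_boot all_order all_algebra.
From mathcomp Require Import ring.
Set Implicit Arguments. Unset Strict Implicit. Unset Printing Implicit Defensive.
Import Order.TTheory GRing.Theory Num.Theory.
Local Open Scope ring_scope.

Record dualZ := DualZ { dre : int; ddu : int }.

Definition dual2pair (x : dualZ) := (dre x, ddu x).
Definition pair2dual (p : int * int) := DualZ p.1 p.2.
Lemma dual2pairK : cancel dual2pair pair2dual. Proof. by case. Qed.
HB.instance Definition _ := Countable.copy dualZ (can_type dual2pairK).

Definition dadd (x y : dualZ) := DualZ (dre x + dre y) (ddu x + ddu y).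
Definition dopp (x : dualZ) := DualZ (- dre x) (- ddu x).
Definition dzero := DualZ 0 0.
(* (a + b s)(c + d s) = ac + (ad + bc) s, since s^2 = 0 *)
Definition dmul (x y : dualZ) :=
  DualZ (dre x * dre y) (dre x * ddu y + ddu x * dre y).
Definition done := DualZ 1 0.

Lemma daddA : associative dadd.
Proof. by move=> [a b] [c d] [e f]; rewrite /dadd /= !addrA. Qed.
Lemma daddC : commutative dadd.
Proof. by move=> [a b] [c d]; rewrite /dadd /= (addrC a) (addrC b). Qed.
Lemma dadd0 : left_id dzero dadd.
Proof. by move=> [a b]; rewrite /dadd /= !add0r. Qed.
Lemma daddN : left_inverse dzero dopp dadd.
Proof. by move=> [a b]; rewrite /dadd /= !addNr. Qed.
HB.instance Definition _ := GRing.isZmodule.Build dualZ daddA daddC dadd0 daddN.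

Lemma dmulA : associative dmul.
Proof. by move=> [a b] [c d] [e f]; rewrite /dmul /=; congr DualZ; ring. Qed.
Lemma dmulC : commutative dmul.
Proof. by move=> [a b] [c d]; rewrite /dmul /=; congr DualZ; ring. Qed.
Lemma dmul1 : left_id done dmul.
Proof. by move=> [a b]; rewrite /dmul /=; congr DualZ; ring. Qed.
Lemma dmulDl : left_distributive dmul dadd.
Proof. by move=> [a b] [c d] [e f]; rewrite /dmul /dadd /=; congr DualZ; ring. Qed.
Lemma done_neq0 : done != (0 : dualZ). Proof. by []. Qed.
HB.instance Definition _ :=
  GRing.Zmodule_isComNzRing.Build dualZ dmulA dmulC dmul1 dmulDl done_neq0.

Definition s_var : dualZ := DualZ 0 1.

(* Indices are 0-based: [Sig k] is sigma_{k+1}, acting on positions k, k+1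
   (0-based), i.e. positions k+1, k+2 in the paper's 1-based numbering. *)
Inductive vgen :=
| Sig of nat
| SigInv of nat
| Tau of nat
| TauInv of nat.  (* tau_{k+1}^{-1} (drawn as the same virtual crossing) *)

Definition gidx (g : vgen) : nat :=
  match g with Sig k | SigInv k | Tau k | TauInv k => k end.
Definition is_virtual (g : vgen) : bool :=
  match g with Tau _ | TauInv _ => true | _ => false end.

Definition valid_word (n : nat) (w : seq vgen) : bool :=
  all (fun g => (gidx g).+1 < n)%N w.

Definition rho_entry (g : vgen) (a b : nat) : dualZ :=
  let k := gidx g in
  if (a != k) && (a != k.+1) then (a == b)%:R
  else if (b != k) && (b != k.+1) then 0
  else if ~~ is_virtual g then
    (* [[0,1],[1,0]], also its own inverse (image of sigma^{-1}) *)
    (a != b)%:R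
  else
    (* [[s, 1+s],[1-s, -s]], which is its own inverse (image of tau^{-1}) *)
    if a == k then (if b == k then s_var else 1 + s_var)
    else (if b == k then 1 - s_var else - s_var).

Definition rho_gen (n : nat) (g : vgen) : 'M[dualZ]_n :=
  \matrix_(a < n, b < n) rho_entry g a b.

Definition rho_word (n : nat) (w : seq vgen) : 'M[dualZ]_n :=
  foldr (fun g M => rho_gen n g *m M) 1%:M w.

(* The diagram of g1 g2 ... gk has g1 at the bottom and gk at the top; a ball
   starting at the top meets the layers in the order gk, ..., g1, i.e. [rev w].
   [ball_step g a b] is the weight with which a ball entering the crossing layer
   of g at (top) position a leaves it at (bottom) position b (0 if impossible):
   - strands not involved in the crossing go straight down (weight 1);
   - at a real crossing the ball continues along its strand (a <-> k, k+1);
   - at a virtual crossing, a ball arriving on the strand from the upper left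
     (top position k, heading to bottom position k+1) jumps to the other strand
     (ending at bottom position k) with weight s and continues (to k+1) with
     weight 1 - s; a ball arriving from the upper right (top position k+1)
     jumps (ending at k+1) with weight -s and continues (to k) with weight 1+s. *)
Definition ball_step (g : vgen) (a b : nat) : dualZ :=
  let k := gidx g in
  if (a != k) && (a != k.+1) then (a == b)%:R
  else if ~~ is_virtual g then
    (if a == k then (b == k.+1)%:R else (b == k)%:R)
  else if a == k then
    (if b == k then s_var else if b == k.+1 then 1 - s_var else 0)
  else
    (if b == k.+1 then - s_var else if b == k then 1 + s_var else 0).

(* A ball path is the sequence of positions p_0 (top), p_1, ..., p_k (bottom)
   of the ball between consecutive crossing layers; its weight is the product
   of the step weights. *)
Definition path_weight (n : nat) (w : seq vgen)
    (p : {ffun 'I_(size w).+1 -> 'I_n}) : dualZ :=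
  \prod_(t < size w)
    ball_step (nth (Tau 0) (rev w) t) (p (inord t)) (p (inord t.+1)).

Definition bowling_ball_matrix (n : nat) (w : seq vgen) : 'M[dualZ]_n :=
  \matrix_(i < n, j < n)
    \sum_(p : {ffun 'I_(size w).+1 -> 'I_n} |
            (p ord0 == i) && (p ord_max == j))
      path_weight p.

(* Summing path weights over all ball paths through a stack of crossing layers,
   one layer at a time, is exactly the expansion of the product of the
   one-layer transfer matrices, taken in the order in which the ball meets the
   layers: top to bottom, i.e. along the reversed word.  The transfer matrix of
   a single generator is the transpose of its image under rho, and transposing
   the product reverses its order once more, giving rho(g1) ... rho(gk). *)

From mathcomp Require Import all_boot all_order all_algebra.
Set Implicit Arguments. Unset Strict Implicit. Unset Printing Implicit Defensive.
Local Open Scope ring_scope.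

Lemma mkseqS_cons (T : Type) (f : nat -> T) m :
  mkseq f m.+1 = f 0%N :: mkseq (f \o succn) m.
Proof. by rewrite /mkseq /= -[1%N]/(1 + 0)%N iotaDl -map_comp. Qed.

Section PathSums.
Variables (R : comNzRingType) (n : nat).

Definition path_sum (m : nat) (F : nat -> 'M[R]_n) (i j : 'I_n) : R :=
  \sum_(p : {ffun 'I_m.+1 -> 'I_n} | (p ord0 == i) && (p ord_max == j))
    \prod_(t < m) F t (p (inord t)) (p (inord t.+1)).

Section ConsPath.
Variable m : nat.

Definition cons_path (i : 'I_n) (q : {ffun 'I_m.+1 -> 'I_n}) :
    {ffun 'I_m.+2 -> 'I_n} :=
  [ffun t => if unlift ord0 t is Some t' then q t' else i].

Definition behead_path (p : {ffun 'I_m.+2 -> 'I_n}) : {ffun 'I_m.+1 -> 'I_n} :=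
  [ffun t => p (lift ord0 t)].

Lemma cons_path_lift i q t : cons_path i q (lift ord0 t) = q t.
Proof. by rewrite ffunE liftK. Qed.

Lemma cons_path0 i q : cons_path i q ord0 = i.
Proof. by rewrite ffunE unlift_none. Qed.

Lemma inordS_lift k : (k <= m)%N -> inord k.+1 = lift ord0 (inord k : 'I_m.+1).
Proof. by move=> km; apply: val_inj; rewrite /= !inordK. Qed.

Lemma cons_path_inordS i q k :
  (k <= m)%N -> cons_path i q (inord k.+1) = q (inord k).
Proof. by move=> km; rewrite inordS_lift // cons_path_lift. Qed.

Lemma cons_pathK i : cancel (cons_path i) behead_path.
Proof. by move=> q; apply/ffunP => t; rewrite ffunE cons_path_lift. Qed.

Lemma behead_pathK (p : {ffun 'I_m.+2 -> 'I_n}) :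
  cons_path (p ord0) (behead_path p) = p.
Proof.
apply/ffunP => t; rewrite ffunE.
by case: unliftP => [t' ->|->]; rewrite ?ffunE.
Qed.

End ConsPath.

Lemma path_sum0 F i j : path_sum 0 F i j = (i == j)%:R.
Proof.
rewrite /path_sum (reindex (fun c : 'I_n => [ffun _ : 'I_1 => c])) /=; last first.
  exists (fun p : {ffun 'I_1 -> 'I_n} => p ord0) => p _ /=; first by rewrite ffunE.
  by apply/ffunP => x; rewrite ffunE (ord1 x).
under eq_bigl => c do rewrite !ffunE.
under eq_bigr => c _ do rewrite big_ord0.
case: (eqVneq i j) => [<-|hij] /=.
  by rewrite (big_pred1 i) // => c; rewrite andbb.
rewrite big_pred0 // => c; apply/andP => [[/eqP -> /eqP]]; exact/eqP.
Qed.

Lemma path_sumS m F i j :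
  path_sum m.+1 F i j = \sum_c F 0%N i c * path_sum m (F \o succn) c j.
Proof.
rewrite /path_sum (reindex (cons_path i)) /=; last first.
  exists (@behead_path m) => [q _|p /andP[/eqP <- _]]; first exact: cons_pathK.
  exact: behead_pathK.
have ord_maxS : ord_max = lift ord0 (ord_max : 'I_m.+1) by apply: val_inj.
have inord0 k : inord 0 = ord0 :> 'I_k.+1 := inord_val ord0.
under eq_bigl => q do rewrite cons_path0 eqxx ord_maxS cons_path_lift /=.
under eq_bigr => q _.
  rewrite big_ord_recl /= cons_path_inordS // (inord0 m.+1) (inord0 m) cons_path0.
  under eq_bigr => t _.
    have [tm tSm] : (t <= m)%N /\ (t.+1 <= m)%N by split; [exact: ltnW|].
    rewrite /bump leq0n add1n !cons_path_inordS //.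
    over.
  over.
rewrite (partition_big (fun q : {ffun 'I_m.+1 -> 'I_n} => q ord0) xpredT) //=.
apply: eq_bigr => c _; rewrite big_distrr /=.
by apply: eq_big => [q|q /andP[_ /eqP ->]]; rewrite // andbC.
Qed.

Lemma path_sum_mulmx m F i j :
  path_sum m F i j = foldr mulmx 1%:M (mkseq F m) i j.
Proof.
elim: m F i j => [|m IH] F i j; first by rewrite path_sum0 mxE.
by rewrite path_sumS mkseqS_cons /= mxE; apply: eq_bigr => c _; rewrite IH.
Qed.

Lemma foldr_mulmx (B : 'M[R]_n) (As : seq 'M[R]_n) :
  foldr mulmx B As = foldr mulmx 1%:M As *m B.
Proof. by elim: As => [|A As IH] /=; rewrite ?mul1mx // IH mulmxA. Qed.

Lemma trmx_foldr_mulmx_rev (As : seq 'M[R]_n) :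
  (foldr mulmx 1%:M (rev As))^T = foldr mulmx 1%:M (map trmx As).
Proof.
elim: As => [|A As IH] /=; first by rewrite trmx1.
by rewrite rev_cons -cats1 foldr_cat /= mulmx1 foldr_mulmx trmx_mul IH.
Qed.

End PathSums.

Definition ball_step_mx (n : nat) (g : vgen) : 'M[dualZ]_n :=
  \matrix_(a < n, b < n) ball_step g a b.

Lemma bowling_ball_matrixE n w :
  bowling_ball_matrix n w = foldr mulmx 1%:M (map (ball_step_mx n) (rev w)).
Proof.
set F := fun t => ball_step_mx n (nth (Tau 0) (rev w) t).
have -> : map (ball_step_mx n) (rev w) = mkseq F (size w).
  by rewrite -(size_rev w) -{1}(mkseq_nth (Tau 0) (rev w)) /mkseq -map_comp.
apply/matrixP => i j; rewrite -path_sum_mulmx !mxE.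
by apply: eq_bigr => p _; apply: eq_bigr => t _; rewrite mxE.
Qed.

Lemma rho_wordE n w : rho_word n w = foldr mulmx 1%:M (map (rho_gen n) w).
Proof. by rewrite foldr_map. Qed.

Lemma ball_step_rho_entry g a b : ball_step g a b = rho_entry g b a.
Proof.
have kSk k : (k == k.+1) = false by rewrite (ltn_eqF (ltnSn k)).
have Skk k : (k.+1 == k) = false by rewrite eq_sym kSk.
rewrite /ball_step /rho_entry; case: g => k /=;
  (have [?|ak] := eqVneq a k; [|have [?|aSk] := eqVneq a k.+1]);
  (have [?|bk] := eqVneq b k; [|have [?|bSk] := eqVneq b k.+1]);
  subst; rewrite ?eqxx ?kSk ?Skk ?(negbTE ak) ?(negbTE aSk) ?(negbTE bk) ?(negbTE bSk) //=.
all: by rewrite eq_sym.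
Qed.

Lemma trmx_ball_step_mx n g : (ball_step_mx n g)^T = rho_gen n g.
Proof. by apply/matrixP => a b; rewrite !mxE ball_step_rho_entry. Qed.

Theorem theorem4p1 (n : nat) (w : seq vgen) :
  valid_word n w -> (bowling_ball_matrix n w)^T = rho_word n w.
Proof.
(* [ball_step] and [rho_entry] agree at every index, so validity is not needed. *)
move=> _.
rewrite bowling_ball_matrixE map_rev trmx_foldr_mulmx_rev -map_comp rho_wordE.
by congr foldr; apply: eq_map => g; exact: trmx_ball_step_mx.
Qed.
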